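(* Let $n\ge 3$ be an integer and let $C_n$ denote the cycle on $n$ vertices. For any $x\in\mathbb{N}$ and any integer $y$ with $0\le y\le x$, \[ P(C_n,x,y) = \left( \frac{x - 1 - \sqrt{(x+1)^2-4y} }{2} \right)^{n} + \left( \frac{x - 1 + \sqrt{(x+1)^2-4y}}{2} \right)^{n} + (-1)^{n} (y - 1). \]
   Context: For a finite simple graph $G=(V,E)$, $x\in\mathbb{N}$ and $y\in\{0,\dots,x\}$, the bivariate chromatic polynomial $P(G,x,y)$ is the number of maps $f:V\to\{1,\dots,x\}$ such that for every edge $\{v,w\}\in E$, either $f(v)\neq f(w)$ or $f(v)=f(w)>y$. (Equivalently: colorings in which adjacent vertices receive different colors or share a color from $\{y+1,\dots,x\}$.) *)

From mathcomp Require Import all_boot all_order all_algebra.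
Set Implicit Arguments. Unset Strict Implicit. Unset Printing Implicit Defensive.

(* A finite simple graph is given by a symmetric irreflexive relation [e]
   on a finite vertex type [V]. Colours {1,...,x} are represented by 'I_x,
   colour c : 'I_x standing for c+1; thus "f v > y" becomes "y <= f v". *)
Definition bivariate_chromatic (V : finType) (e : rel V) (x y : nat) : nat :=
  #|[set f : {ffun V -> 'I_x} |
      [forall v, forall w, e v w ==> ((f v != f w) || (y <= f v))]]|.

Definition cycle_rel (n : nat) : rel 'I_n :=
  fun i j => (nat_of_ord j == i.+1 %% n) || (nat_of_ord i == j.+1 %% n).

From mathcomp Require Import all_boot all_order all_algebra.
From mathcomp Require Import ring lra.
Import Order.TTheory GRing.Theory Num.Theory.

(* Colourings of C_n are closed walks of length n for the relation
   "different colours, or the same colour > y", so P(C_n,x,y) = tr A^n with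
   A = J - D, J the all-ones matrix and D the diagonal 0/1 matrix of the
   colours <= y.  The row sums of A^k, and their parts over the first y
   columns, obey a 2x2 linear system with characteristic polynomial
   t^2 - (x-1) t - (x-y), whose roots are the two numbers in the formula.  Since
   each diagonal entry of A^(k+1) is a row sum of A^k minus, for the first y
   colours, the previous diagonal entry, the trace picks up the additional
   alternating term (-1)^n (y-1). *)

Set Implicit Arguments.
Unset Strict Implicit.
Unset Printing Implicit Defensive.
Local Open Scope ring_scope.

Section WalkExtension.
Variables (T : finType) (k : nat).

Definition ffun_rcons (g : {ffun 'I_k.+1 -> T}) (c : T) : {ffun 'I_k.+2 -> T} :=
  [ffun i => if unlift ord_max i is Some j then g j else c].

Lemma ffun_rcons_max g c : ffun_rcons g c ord_max = c.
Proof. by rewrite ffunE unlift_none. Qed.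

Lemma ffun_rcons_lift g c j : ffun_rcons g c (lift ord_max j) = g j.
Proof. by rewrite ffunE liftK. Qed.

Lemma ffun_rcons_val g c (i : 'I_k.+2) (j : 'I_k.+1) :
  (i : nat) = j -> ffun_rcons g c i = g j.
Proof.
move=> eij; rewrite -(ffun_rcons_lift g c); congr (_ _); apply: val_inj.
by rewrite /= /bump leqNgt ltn_ord.
Qed.

Lemma sum_ffun_rcons (V : nmodType) (F : {ffun 'I_k.+2 -> T} -> V) :
  \sum_f F f = \sum_(g : {ffun 'I_k.+1 -> T}) \sum_(c : T) F (ffun_rcons g c).
Proof.
rewrite pair_big /= (reindex (fun p => ffun_rcons p.1 p.2)) //=.
exists (fun f => ([ffun j => f (lift ord_max j)], f ord_max)) => [[g c] _ | f _] /=.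
  by congr (_, _); [apply/ffunP => j; rewrite ffunE ffun_rcons_lift | rewrite ffun_rcons_max].
by apply/ffunP => i; rewrite ffunE; case: unliftP => [j ->|->] //; rewrite ffunE.
Qed.

End WalkExtension.

Arguments ffun_rcons_val {T k g c i} j.

Section TransferMatrix.
Variables (R : pzSemiRingType) (m : nat) (A : 'M[R]_m).

Definition walk_weight {k} (f : {ffun 'I_k.+1 -> 'I_m}) : R :=
  \prod_(i < k) A (f (widen_ord (leqnSn k) i)) (f (lift ord0 i)).

Lemma mxpow_walks k a b :
  (A ^+ k) a b =
  \sum_(f : {ffun 'I_k.+1 -> 'I_m} | (f ord0 == a) && (f ord_max == b))
    walk_weight f.
Proof.
elim: k a b => [|k IHk] a b.
  rewrite expr0 mxE /walk_weight; case: (eqVneq a b) => [<-|neq_ab].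
    rewrite (big_pred1 [ffun=> a]) ?big_ord0 // => f /=.
    apply/idP/eqP => [/andP[/eqP f0 _]|->]; last by rewrite !ffunE eqxx.
    by apply/ffunP => i; rewrite ffunE ord1.
  rewrite big_pred0 // => f; apply/negP => /andP[/eqP f0 /eqP f1].
  by move/eqP: neq_ab; apply; rewrite -f0 -f1; congr (f _); apply: val_inj.
rewrite exprSr -mulmxE mxE.
transitivity (\sum_(g : {ffun 'I_k.+1 -> 'I_m} | g ord0 == a)
                walk_weight g * A (g ord_max) b).
  rewrite (partition_big (fun g : {ffun 'I_k.+1 -> 'I_m} => g ord_max) predT) //=.
  apply: eq_bigr => c _; rewrite IHk big_distrl /=.
  by apply: eq_big => [g|g /andP[_ /eqP ->]].
rewrite [RHS]big_mkcond sum_ffun_rcons big_mkcond /=; apply: eq_bigr => g _.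
rewrite (bigD1 b) //= big1 ?addr0 => [|c /negbTE nb]; last first.
  by rewrite ffun_rcons_max nb andbF.
rewrite ffun_rcons_max eqxx andbT (ffun_rcons_val ord0) //.
case: (g ord0 == a) => //.
rewrite /walk_weight big_ord_recr /= (ffun_rcons_val ord_max) //.
have -> : lift ord0 (ord_max : 'I_k.+1) = ord_max :> 'I_k.+2 by apply: val_inj.
rewrite ffun_rcons_max; congr (_ * _); apply: eq_bigr => i _.
by rewrite (ffun_rcons_val (widen_ord _ i)) // (ffun_rcons_val (lift ord0 i)).
Qed.

Lemma mxtrace_exp_closed_walks k :
  \tr (A ^+ k.+1) =
  \sum_(f : {ffun 'I_k.+1 -> 'I_m}) \prod_(i < k.+1) A (f i) (f (ordS i)).
Proof.
rewrite (partition_big (fun f : {ffun 'I_k.+1 -> 'I_m} => f ord0) predT) //=.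
apply: eq_bigr => a _; rewrite exprSr -mulmxE mxE.
rewrite (partition_big (fun f : {ffun 'I_k.+1 -> 'I_m} => f ord_max) predT) //=.
apply: eq_bigr => b _; rewrite mxpow_walks big_distrl /=.
apply: eq_big => [f|f /andP[/eqP f0 /eqP fmax]] //.
rewrite big_ord_recr /= -f0 -fmax; congr (_ * A _ (f _)); last first.
  by apply: val_inj; rewrite /= modnn.
apply: eq_bigr => i _; congr (A _ (f _)); apply: val_inj => /=.
by rewrite modn_small // ltnS.
Qed.

End TransferMatrix.

Lemma prodr_nat_bool (R : pzSemiRingType) (I : finType) (b : pred I) :
  \prod_i (b i)%:R = [forall i, b i]%:R :> R.
Proof.
rewrite -natr_prod; congr _%:R.
case: forallP => [bT|]; first by rewrite big1 // => i _; rewrite bT.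
move/forallP; rewrite negb_forall => /existsP[i /negbTE bFi].
by rewrite (bigD1 i) //= bFi.
Qed.

Lemma card_closed_walks (R : pzSemiRingType) (m : nat) (r : rel 'I_m) k :
  #|[set f : {ffun 'I_k.+1 -> 'I_m} | [forall i, r (f i) (f (ordS i))]]|%:R
  = \tr ((\matrix_(b, c) (r b c)%:R) ^+ k.+1) :> R.
Proof.
rewrite mxtrace_exp_closed_walks -sum1_card natr_sum big_mkcond /=.
apply: eq_bigr => f _; rewrite inE.
under [RHS]eq_bigr do rewrite mxE.
by rewrite prodr_nat_bool; case: forallP.
Qed.

Lemma cycle_rel_ordS (T : Type) (r : rel T) k (f : 'I_k.+1 -> T) :
  symmetric r ->
  [forall v, forall w, cycle_rel v w ==> r (f v) (f w)] =
  [forall i, r (f i) (f (ordS i))].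
Proof.
move=> r_sym; apply/forallP/forallP => [edges i|steps v].
  by have /forallP/(_ (ordS i)) := edges i; rewrite /cycle_rel eqxx.
apply/forallP => w; apply/implyP; rewrite /cycle_rel => /orP[] /eqP e.
  by have -> : w = ordS v by apply: val_inj.
have -> : v = ordS w by apply: val_inj.
by rewrite r_sym.
Qed.

Section SecondOrderRecurrence.
Variables (R : comPzRingType) (p q : R).

Definition rec2 (s : nat -> R) := forall k, s k.+2 = p * s k.+1 + q * s k.

Lemma rec2_eq (s1 s2 : nat -> R) :
  rec2 s1 -> rec2 s2 -> s1 0 = s2 0 -> s1 1 = s2 1 -> s1 =1 s2.
Proof.
move=> rec_s1 rec_s2 e0 e1 k.
suff [] : s1 k = s2 k /\ s1 k.+1 = s2 k.+1 by [].
elim: k => [//|k [IH1 IH2]]; split=> //.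
by rewrite rec_s1 rec_s2 IH1 IH2.
Qed.

Lemma eq_rec2 (s1 s2 : nat -> R) : s1 =1 s2 -> rec2 s1 -> rec2 s2.
Proof. by move=> e12 rec_s1 k; rewrite -!e12. Qed.

Lemma rec2_shift (s : nat -> R) : rec2 s -> rec2 (fun k => s k.+1).
Proof. by move=> rec_s k; apply: rec_s. Qed.

Lemma rec2B (s1 s2 : nat -> R) :
  rec2 s1 -> rec2 s2 -> rec2 (fun k => s1 k - s2 k).
Proof. by move=> rec_s1 rec_s2 k; rewrite rec_s1 rec_s2; ring. Qed.

Lemma rec2_sum (I : finType) (P : pred I) (s : I -> nat -> R) :
  (forall i, rec2 (s i)) -> rec2 (fun k => \sum_(i | P i) s i k).
Proof.
move=> rec_s k; rewrite 2!mulr_sumr -big_split /=.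
by apply: eq_bigr => i _; apply: rec_s.
Qed.

Lemma rec2_linear_system (a b c d : R) (u v : nat -> R) :
  p = a + d -> q = b * c - a * d ->
  (forall k, u k.+1 = a * u k + b * v k) ->
  (forall k, v k.+1 = c * u k + d * v k) -> rec2 u.
Proof.
move=> Ep Eq u_succ v_succ k; rewrite Ep Eq.
have v_of_u : b * v k = u k.+1 - a * u k by rewrite u_succ; ring.
by rewrite [u k.+2]u_succ v_succ mulrDr (mulrCA b d) v_of_u; ring.
Qed.

(* If [h k.+1 + h k] satisfies the recurrence, the defect
   [h k.+2 - p * h k.+1 - q * h k] alternates in sign, so it vanishes
   as soon as it vanishes at [k = 0]. *)
Lemma rec2_from_succ_add (h : nat -> R) :
  rec2 (fun k => h k.+1 + h k) -> h 2 = p * h 1 + q * h 0 -> rec2 h.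
Proof.
move=> rec_sum h2 k; elim: k => [//|k IH].
have /= sum_eq := rec_sum k.
apply: (addIr (h k.+2)); rewrite sum_eq IH; ring.
Qed.

End SecondOrderRecurrence.

Lemma rec2_power_sum (R : comPzRingType) (l1 l2 : R) :
  rec2 (l1 + l2) (- (l1 * l2)) (fun k => l1 ^+ k + l2 ^+ k).
Proof. by move=> k; rewrite !exprS; ring. Qed.

Definition colour_ok (x y : nat) : rel 'I_x := fun b c => (b != c) || (y <= b)%N.

Lemma colour_ok_sym x y : symmetric (@colour_ok x y).
Proof. by move=> b c; rewrite /colour_ok eq_sym; case: eqP => [->|]. Qed.

Lemma bivariate_chromatic_cycle x y k :
  bivariate_chromatic (@cycle_rel k.+1) x y =
  #|[set f : {ffun 'I_k.+1 -> 'I_x} | [forall i, colour_ok y (f i) (f (ordS i))]]|.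
Proof.
by apply: eq_card => f; rewrite !inE -(cycle_rel_ordS _ (@colour_ok_sym x y)).
Qed.

Definition colour_mx (R : pzSemiRingType) (x y : nat) : 'M[R]_x :=
  \matrix_(b, c) (colour_ok y b c)%:R.

Section BivariateTransferMatrix.
Variables (R : comPzRingType) (x y : nat).
Hypothesis le_yx : (y <= x)%N.

Local Notation A := (colour_mx R x y).
Let row_sum k (a : 'I_x) := \sum_b (A ^+ k) a b.
Let low_row_sum k (a : 'I_x) := \sum_(b : 'I_x | (b < y)%N) (A ^+ k) a b.
Let low_diag_sum k := \sum_(a : 'I_x | (a < y)%N) (A ^+ k) a a.

Lemma sum_low_const (c : R) : \sum_(b : 'I_x | (b < y)%N) c = y%:R * c.
Proof.
by rewrite (big_ord_narrow_cond (P := predT)) /= sumr_const card_ord mulr_natl.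
Qed.

Lemma sum_low_indicator (F : 'I_x -> R) :
  \sum_(b : 'I_x) (b < y)%N%:R * F b = \sum_(b : 'I_x | (b < y)%N) F b.
Proof.
rewrite [RHS]big_mkcond; apply: eq_bigr => b _.
by case: ifP; rewrite ?mul1r ?mul0r.
Qed.

Lemma colour_mxE b c : A b c = 1 - ((b == c) && (c < y)%N)%:R.
Proof.
rewrite mxE /colour_ok leqNgt; case: eqVneq => [->|] /=; last by rewrite subr0.
by case: (c < y)%N; rewrite ?subrr ?subr0.
Qed.

Lemma colour_mx_exp_succE k a c :
  (A ^+ k.+1) a c = row_sum k a - (c < y)%N%:R * (A ^+ k) a c.
Proof.
rewrite exprSr -mulmxE mxE; under eq_bigr do rewrite colour_mxE mulrBr mulr1.
rewrite sumrB; congr (_ - _).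
rewrite (bigD1 c) //= big1 ?addr0 => [|b /negbTE nbc]; last by rewrite nbc mulr0.
by rewrite eqxx mulrC.
Qed.

Lemma row_sum_succ k a : row_sum k.+1 a = x%:R * row_sum k a - low_row_sum k a.
Proof.
rewrite {1}/row_sum; under eq_bigr do rewrite colour_mx_exp_succE.
by rewrite sumrB sumr_const card_ord mulr_natl sum_low_indicator.
Qed.

Lemma low_row_sum_succ k a :
  low_row_sum k.+1 a = y%:R * row_sum k a - low_row_sum k a.
Proof.
rewrite {1}/low_row_sum.
under eq_bigr => c c_low do rewrite colour_mx_exp_succE c_low mul1r.
by rewrite sumrB sum_low_const.
Qed.

Lemma rec2_row_sums (P : pred 'I_x) :
  rec2 (x%:R - 1) (x%:R - y%:R) (fun k => \sum_(a | P a) row_sum k a).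
Proof.
apply: rec2_sum => a.
apply: (@rec2_linear_system _ _ _ x%:R (-1) y%:R (-1) _ (low_row_sum^~ a)).
- by [].
- by ring.
- by move=> k; rewrite row_sum_succ; ring.
- by move=> k; rewrite low_row_sum_succ; ring.
Qed.

Lemma mxtrace_colour_mx_succ k :
  \tr (A ^+ k.+1) = \sum_(a : 'I_x) row_sum k a - low_diag_sum k.
Proof.
rewrite /mxtrace; under eq_bigr do rewrite colour_mx_exp_succE.
by rewrite sumrB sum_low_indicator.
Qed.

Lemma low_diag_sum_succ k :
  low_diag_sum k.+1 = \sum_(a : 'I_x | (a < y)%N) row_sum k a - low_diag_sum k.
Proof.
rewrite {1}/low_diag_sum.
under eq_bigr => a a_low do rewrite colour_mx_exp_succE a_low mul1r.
by rewrite sumrB.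
Qed.

Lemma row_sum0 a : row_sum 0 a = 1.
Proof.
rewrite /row_sum (bigD1 a) //= big1 => [|b nba]; first by rewrite expr0 mxE eqxx addr0.
by rewrite expr0 mxE eq_sym (negbTE nba).
Qed.

Lemma low_diag_sum0 : low_diag_sum 0 = y%:R.
Proof.
by rewrite /low_diag_sum; under eq_bigr do rewrite expr0 mxE eqxx; rewrite sum_low_const mulr1.
Qed.

Lemma low_row_sum0 a : low_row_sum 0 a = (a < y)%N%:R.
Proof.
rewrite /low_row_sum -sum_low_indicator (bigD1 a) //= big1 => [|b nba].
  by rewrite expr0 mxE eqxx mulr1 addr0.
by rewrite expr0 mxE eq_sym (negbTE nba) mulr0.
Qed.

Lemma sum_row_sum0 : \sum_(a : 'I_x) row_sum 0 a = x%:R.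
Proof. by under eq_bigr do rewrite row_sum0; rewrite sumr_const card_ord. Qed.

Lemma sum_row_sum1 : \sum_(a : 'I_x) row_sum 1 a = x%:R * x%:R - y%:R.
Proof.
under eq_bigr do rewrite row_sum_succ row_sum0 low_row_sum0 mulr1.
rewrite sumrB sumr_const card_ord mulr_natl; congr (_ - _).
by rewrite -[RHS]mulr1 -sum_low_const -sum_low_indicator; apply: eq_bigr => a _; rewrite mulr1.
Qed.

Lemma low_diag_sum1 : low_diag_sum 1 = 0.
Proof.
rewrite low_diag_sum_succ low_diag_sum0; under eq_bigr do rewrite row_sum0.
by rewrite sum_low_const mulr1 subrr.
Qed.

Lemma low_diag_sum2 : low_diag_sum 2 = y%:R * (x%:R - 1).
Proof.
rewrite low_diag_sum_succ low_diag_sum1 subr0 -sum_low_const.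
apply: eq_bigr => a a_low.
by rewrite row_sum_succ row_sum0 low_row_sum0 a_low mulr1.
Qed.

Lemma mxtrace_colour_mx_exp (l1 l2 : R) :
  l1 + l2 = x%:R - 1 -> l1 * l2 = y%:R - x%:R -> forall k,
  \tr (A ^+ k.+1) = l1 ^+ k.+1 + l2 ^+ k.+1 + (-1) ^+ k.+1 * (y%:R - 1).
Proof.
move=> sum_l prod_l k.
pose eps i : R := (-1) ^+ i * (y%:R - 1).
pose p := x%:R - 1 : R; pose q := x%:R - y%:R : R.
have rec_low : rec2 p q (fun j => low_diag_sum j - eps j).
  apply: rec2_from_succ_add.
    apply: eq_rec2 (rec2_row_sums (fun a => (a < y)%N)) => j.
    by rewrite low_diag_sum_succ /eps exprS; ring.
  rewrite low_diag_sum2 low_diag_sum1 low_diag_sum0 /eps /p /q expr2 expr1 expr0.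
  by ring.
have rec_tr : rec2 p q (fun j => \tr (A ^+ j.+1) - eps j.+1).
  apply: eq_rec2 (rec2B (rec2_row_sums predT) rec_low) => j.
  by rewrite mxtrace_colour_mx_succ /eps exprS; ring.
have rec_pow : rec2 p q (fun j => l1 ^+ j.+1 + l2 ^+ j.+1).
  have -> : p = l1 + l2 by [].
  have -> : q = - (l1 * l2) by rewrite prod_l opprB.
  exact: rec2_shift (rec2_power_sum l1 l2).
apply/(canRL (subrK _))/(rec2_eq rec_tr rec_pow) => /=.
  rewrite mxtrace_colour_mx_succ sum_row_sum0 low_diag_sum0 /eps expr1 sum_l.
  by ring.
rewrite mxtrace_colour_mx_succ sum_row_sum1 low_diag_sum1 /eps.
have -> : l1 ^+ 2 + l2 ^+ 2 = (l1 + l2) ^+ 2 - 2 * (l1 * l2) by ring.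
by rewrite sum_l prod_l !expr2; ring.
Qed.

End BivariateTransferMatrix.

Theorem theorem2 (R : rcfType) (n x y : nat) (hn : (3 <= n)%N) (hy : (y <= x)%N) :
  (@bivariate_chromatic 'I_n (@cycle_rel n) x y)%:R =
    ((x%:R - 1 - Num.sqrt ((x%:R + 1) ^+ 2 - 4 * y%:R)) / 2) ^+ n
  + ((x%:R - 1 + Num.sqrt ((x%:R + 1) ^+ 2 - 4 * y%:R)) / 2) ^+ n
  + (-1) ^+ n * (y%:R - 1) :> R.
Proof.
case: n hn => [//|k] _.
set s := Num.sqrt _; set l1 := (_ - s) / 2; set l2 := (_ + s) / 2.
have discr_ge0 : 0 <= (x%:R + 1) ^+ 2 - 4 * y%:R :> R.
  have : (y%:R <= x%:R :> R) by rewrite ler_nat.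
  have : 0 <= (x%:R - 1) ^+ 2 :> R by apply: sqr_ge0.
  by move=> *; nra.
have s2 : s ^+ 2 = (x%:R + 1) ^+ 2 - 4 * y%:R by rewrite sqr_sqrtr.
rewrite bivariate_chromatic_cycle card_closed_walks.
apply: (mxtrace_colour_mx_exp hy); rewrite /l1 /l2; first by field.
have -> : (x%:R - 1 - s) / 2 * ((x%:R - 1 + s) / 2) = ((x%:R - 1) ^+ 2 - s ^+ 2) / 4 :> R.
  by field.
by rewrite s2; field.
Qed.
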